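(* The generating function of the diagonal sums $\sum_{k \ge 1} w(n-k,k)$ (with $w(m,k)=0$ for $m<0$) is \[ \sum_{n \ge 0} \Bigl(\sum_{k \ge 1} w(n-k,k)\Bigr) q^n = \frac{q^6}{(1 - q)^3 (1 + q) (1 - 2 q^2)}. \]
   Context: A composition of $n \ge 0$ is a finite sequence $(c_1,\dots,c_t)$ of positive integers with $c_1+\cdots+c_t=n$; the empty composition is the unique composition of $0$. Let $C_{12}(n)$ be the set of compositions of $n$ all of whose parts lie in $\{1,2\}$. The number of water cells of a composition $(c_1,\dots,c_t)$ is $\sum_{i=1}^{t} \max\bigl(0, \min(\max_{j \le i} c_j, \max_{j \ge i} c_j) - c_i\bigr)$ (the number of unit squares that would hold water poured over its bargraph, in which column $i$ has height $c_i$). For $n,k \ge 0$, $W(n,k)$ is the set of compositions in $C_{12}(n)$ with exactly $k$ water cells and $w(n,k)=|W(n,k)|$. *)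

From mathcomp Require Import all_boot all_order all_algebra.
Set Implicit Arguments. Unset Strict Implicit. Unset Printing Implicit Defensive.
Import GRing.Theory.

Definition is_comp12 (n : nat) (c : seq nat) : bool :=
  all (fun x => (x == 1) || (x == 2)) c && (sumn c == n).

(* number of water cells: sum_i max(0, min(max_{j<=i} c_j, max_{j>=i} c_j) - c_i)
   (truncated nat subtraction realizes max(0, _)) *)
Definition water (c : seq nat) : nat :=
  \sum_(i < size c)
    (minn (foldr maxn 0 (take i.+1 c)) (foldr maxn 0 (drop i c)) - nth 0 c i).

(* w(n,k) = |W(n,k)|: a composition in C12(n) has length t <= n and parts in {1,2},
   so it is encoded injectively by a t.-tuple over 'I_3 (t <= n). *)
Definition w (n k : nat) : nat :=
  \sum_(t < n.+1)
    #|[set u : t.-tuple 'I_3 |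
        is_comp12 n (map val u) && (water (map val u) == k)]|.

(* diagonal sums  sum_{k>=1} w(n-k,k), with w(m,k)=0 for m<0 (i.e. k>n) *)
Definition diag (n : nat) : nat := \sum_(1 <= k < n.+1) w (n - k) k.

Definition diagGF (N : nat) : {poly int} := \sum_(n < N) (diag n)%:R *: 'X^n.

Definition denom : {poly int} :=
  (1 - 'X) ^+ 3 * (1 + 'X) * (1 - 2%:R *: 'X^2).

From mathcomp Require Import all_boot all_order all_algebra.
From mathcomp Require Import zify ring.
Import GRing.Theory.
Set Implicit Arguments. Unset Strict Implicit.

(* Split a {1,2}-composition by its first part.  A leading 1 changes no water.
   A leading 2 is a wall at least as high as every part, so behind it the
   water of s is  lwater s = sum_i (max_(j >= i) s_j - s_i);  in turn a leading
   1 raises lwater by one exactly when a 2 follows, and a leading 2 changes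
   nothing.  Weighting a composition s by sumn s plus its water, the
   generating functions W, L, T, O of the counts wet, lwet, with2, no2 below
   therefore satisfy
     (1 - q) W = q^2 L,  (1 - q^2) L = q^2 T,  (1 - 2q^2) T = q^2 O,  (1 - q) O = 1,
   and W is the generating function of the diagonal sums. *)

Fixpoint words3 (t : nat) : seq (seq nat) :=
  if t is t'.+1 then
    [seq 0 :: s | s <- words3 t'] ++ [seq 1 :: s | s <- words3 t']
      ++ [seq 2 :: s | s <- words3 t']
  else [:: [::]].

Lemma mem_map_cons (x y : nat) s l : (x :: s \in map (cons y) l) = (x == y) && (s \in l).
Proof. by apply/mapP/andP => [[s' _ [-> ->]] //|[/eqP-> s_l]]; exists s. Qed.

Lemma mem_words3 t s : (s \in words3 t) = (size s == t) && all (fun x => x < 3) s.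
Proof.
elim: t s => [|t IH] [|x s] //=.
  by rewrite !mem_cat; apply/or3P => -[] /mapP[].
rewrite !mem_cat !mem_map_cons !IH eqSS.
by case: x => [|[|[|x]]] /=; rewrite ?orbF ?andbF.
Qed.

Lemma size_words3 t s : s \in words3 t -> size s = t.
Proof. by rewrite mem_words3 => /andP[/eqP]. Qed.

Lemma uniq_words3 t : uniq (words3 t).
Proof.
have uniq_map_cons x (l : seq (seq nat)) : uniq l -> uniq (map (cons x) l).
  by move=> Hl; rewrite map_inj_uniq // => ? ? [].
have disjoint_cons x y (l l' : seq (seq nat)) :
    x != y -> ~~ has (mem (map (cons x) l)) (map (cons y) l').
  move=> xy; apply/hasPn => _ /mapP[s _ ->].
  by rewrite /= mem_map_cons eq_sym (negbTE xy).
elim: t => //= t IH.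
by rewrite !cat_uniq !uniq_map_cons //= !andbT has_cat negb_or !disjoint_cons.
Qed.

Lemma card_tuple3 t (P : pred (seq nat)) :
  #|[set u : t.-tuple 'I_3 | P (map val u)]| = count P (words3 t).
Proof.
rewrite cardsE cardE /enum_mem size_filter -enumT.
rewrite -(count_map (fun u : t.-tuple 'I_3 => map val u)).
apply: (permP _) P; apply: uniq_perm; first 2 last.
- move=> s; rewrite mem_words3; apply/mapP/andP => [[u _ ->]|[/eqP Hs Ha]].
    rewrite size_map size_tuple all_map; split => //.
    by apply/allP => x _; exact: ltn_ord.
  have Hsz : size (map (insubd (ord0 : 'I_3)) s) == t by rewrite size_map Hs.
  exists (Tuple Hsz); first by rewrite mem_enum.
  rewrite /= -map_comp -[LHS]map_id; apply/eq_in_map => x Hx /=.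
  by rewrite insubdK //; move/allP: Ha; apply.
- rewrite map_inj_uniq ?enum_uniq // => u v /= Huv.
  by apply: val_inj; exact: (inj_map val_inj) Huv.
- exact: uniq_words3.
Qed.

Definition count_short (P : pred (seq nat)) (t : nat) : nat :=
  \sum_(j < t.+1) count P (words3 j).

Lemma count_short0 (P : pred (seq nat)) : count_short P 0 = P [::].
Proof. by rewrite /count_short big_ord1 /= addn0. Qed.

Lemma count_shortS (P : pred (seq nat)) t :
  count_short P t.+1 = P [::] + (count_short (fun s => P (0 :: s)) t
    + count_short (fun s => P (1 :: s)) t + count_short (fun s => P (2 :: s)) t).
Proof.
rewrite /count_short big_ord_recl /= addn0; congr (_ + _).
by rewrite -!big_split; apply: eq_bigr => j _; rewrite /= !count_cat !count_map addnA.
Qed.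

Lemma eq_count_short (P Q : pred (seq nat)) t : P =1 Q -> count_short P t = count_short Q t.
Proof. by move=> PQ; apply: eq_bigr => j _; apply: eq_count. Qed.

Lemma count_short_pred0 (P : pred (seq nat)) t : P =1 pred0 -> count_short P t = 0.
Proof.
by move=> /eq_count_short->; rewrite /count_short big1 // => j _; rewrite count_pred0.
Qed.

Lemma count_short_bound (P : pred (seq nat)) t t' :
  (forall s, P s -> size s <= t) -> t <= t' -> count_short P t' = count_short P t.
Proof.
move=> Psize; elim: t' => [|t' IH]; first by rewrite leqn0 => /eqP->.
rewrite leq_eqVlt => /orP[/eqP<- //|lt_t_t'].
rewrite [LHS]/count_short big_ord_recr -/(count_short P t') IH //.
rewrite (@eq_in_count _ _ pred0) ?count_pred0 /= ?addn0 // => s s_word.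
by apply/negP => /Psize; rewrite (@size_words3 t'.+1 s s_word); lia.
Qed.

Lemma sum_count_pointwise (I T : Type) (r : seq I) (P : I -> pred T) (Q : pred T) l :
  (forall x, \sum_(i <- r) P i x = Q x) -> \sum_(i <- r) count (P i) l = count Q l.
Proof.
move=> PQ; elim: l => [|x l IH] /=; first by rewrite big1.
by rewrite big_split /= IH PQ.
Qed.

Definition all12 (s : seq nat) : bool := all (fun x => (x == 1) || (x == 2)) s.

Definition peak (s : seq nat) : nat := foldr maxn 0 s.

(* The water held by s behind a wall at its left at least as tall as its parts:
   only the maxima to the right of each column matter. *)
Definition lwater (s : seq nat) : nat :=
  \sum_(i < size s) (peak (drop i s) - nth 0 s i).

Lemma all12_take n s : all12 s -> all12 (take n s).
Proof. by move=> s12; apply/allP => x /mem_take/(allP s12). Qed.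

Lemma all12_drop n s : all12 s -> all12 (drop n s).
Proof. by move=> s12; apply/allP => x /mem_drop/(allP s12). Qed.

Lemma peak_le2 s : all12 s -> peak s <= 2.
Proof. by elim: s => //= x s IH /andP[/orP[]/eqP-> /IH]; rewrite /peak /=; lia. Qed.

Lemma nth_le_peak_take s i : i < size s -> nth 0 s i <= peak (take i.+1 s).
Proof.
elim: s i => [|x s IH] [|i] //=; rewrite /peak /= ?leq_maxl //.
by move=> /IH; rewrite /peak => H; apply: leq_trans H (leq_maxr _ _).
Qed.

Lemma nth_all12_gt0 s i : all12 s -> i < size s -> 0 < nth 0 s i.
Proof.
elim: s i => [|x s IH] [|i] //= /andP[Hx H] Hi; last exact: IH.
by case/orP: Hx => /eqP->.
Qed.

Lemma size_le_sumn s : all12 s -> size s <= sumn s.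
Proof. by elim: s => //= x s IH /andP[/orP[]/eqP-> /IH]; lia. Qed.

Lemma water_nil : water [::] = 0.
Proof. by rewrite /water big_ord0. Qed.

Lemma lwater_nil : lwater [::] = 0.
Proof. by rewrite /lwater big_ord0. Qed.

Lemma water_cons x s : water (x :: s) =
  \sum_(i < size s) (minn (maxn x (peak (take i.+1 s))) (peak (drop i s)) - nth 0 s i).
Proof.
rewrite /water /= big_ord_recl /= take0 /=.
by rewrite [X in X + _](_ : _ = 0) ?add0n //; lia.
Qed.

Lemma water_cons1 s : all12 s -> water (1 :: s) = water s.
Proof.
move=> s12; rewrite water_cons /water; apply: eq_bigr => i _.
have := nth_le_peak_take (ltn_ord i); have := nth_all12_gt0 s12 (ltn_ord i).
by rewrite /peak; lia.
Qed.

Lemma water_cons2 s : all12 s -> water (2 :: s) = lwater s.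
Proof.
move=> s12; rewrite water_cons /lwater; apply: eq_bigr => i _.
have := peak_le2 (all12_take i.+1 s12); have := peak_le2 (all12_drop i s12).
lia.
Qed.

Lemma lwater_cons x s : lwater (x :: s) = (maxn x (peak s) - x) + lwater s.
Proof. by rewrite /lwater /= big_ord_recl. Qed.

Lemma lwater_cons1 s : all12 s -> lwater (1 :: s) = (2 \in s) + lwater s.
Proof.
move=> s12; rewrite lwater_cons; congr (_ + _).
elim: s s12 => //= x s IH /andP[/orP[]/eqP-> s12]; rewrite in_cons /=;
  have := IH s12; have := peak_le2 s12; rewrite /peak /=; case: (2 \in s) => /=; lia.
Qed.

Lemma lwater_cons2 s : all12 s -> lwater (2 :: s) = lwater s.
Proof. by move=> s12; rewrite lwater_cons; have := peak_le2 s12; lia. Qed.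

Lemma lwater_eq0 s : all12 s -> 2 \notin s -> lwater s = 0.
Proof.
elim: s => [|x s IH]; first by rewrite lwater_nil.
move=> /andP[/orP[]/eqP-> s12]; rewrite in_cons //= => s_no2.
by rewrite lwater_cons1 // (negPf s_no2) IH.
Qed.

Definition weighted (stat : seq nat -> nat) (Q : pred (seq nat)) (n : nat) : pred (seq nat) :=
  fun s => all12 s && (sumn s + stat s == n) && Q s.

Definition wcount (stat : seq nat -> nat) (Q : pred (seq nat)) (n : nat) : nat :=
  count_short (weighted stat Q n) n.

Lemma size_weighted stat Q n s : weighted stat Q n s -> size s <= n.
Proof. by case/andP=> /andP[/size_le_sumn + /eqP]; lia. Qed.

Lemma wcount_lt2 stat Q n :
  n < 2 -> stat [::] = 0 -> ~~ Q [::] -> ~~ Q [:: 1] -> wcount stat Q n = 0.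
Proof.
move=> n_lt2 stat0 /negbTE Q0 /negbTE Q1.
case: n n_lt2 => [|[|//]] _; rewrite /wcount ?count_shortS !count_short0 /weighted /=.
  by rewrite Q0 andbF.
by rewrite Q0 Q1 !andbF.
Qed.

Lemma wcountS stat Q n : stat [::] = 0 ->
  wcount stat Q n.+1 = count_short (fun s => weighted stat Q n.+1 (1 :: s)) n
                     + count_short (fun s => weighted stat Q n.+1 (2 :: s)) n.
Proof.
move=> stat0; rewrite /wcount count_shortS.
have -> : weighted stat Q n.+1 [::] = false by rewrite /weighted /= stat0.
by rewrite count_short_pred0.
Qed.

Lemma count_short_weighted_cons k stat Q n stat' Q' n' t :
  n' <= t ->
  (forall s, all12 s -> weighted stat Q n (k :: s) = weighted stat' Q' n' s) ->
  count_short (fun s => weighted stat Q n (k :: s)) t = wcount stat' Q' n'.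
Proof.
move=> le_n't eq_cons; rewrite /wcount -(count_short_bound (@size_weighted _ _ _) le_n't).
apply: eq_count_short => s; case s12: (all12 s); first exact: eq_cons.
by rewrite /weighted /= s12 !andbF.
Qed.

Lemma wcount_predT_split stat (R : pred (seq nat)) n :
  wcount stat predT n = wcount stat R n + wcount stat (predC R) n.
Proof.
rewrite /wcount /count_short -big_split; apply: eq_bigr => j _ /=.
elim: (words3 j) => //= x l ->; rewrite /weighted /= andbT.
by case: (R x); rewrite /= ?andbT ?andbF ?addn0; lia.
Qed.

Definition wet (n : nat) : nat := wcount water (fun s => 0 < water s) n.
Definition lwet (n : nat) : nat := wcount lwater (fun s => 0 < lwater s) n.
Definition with2 (n : nat) : nat := wcount lwater (fun s => 2 \in s) n.
Definition no2 (n : nat) : nat := wcount lwater (fun s => 2 \notin s) n.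

Lemma wet_lt2 n : n < 2 -> wet n = 0.
Proof. by move=> n_lt2; rewrite /wet wcount_lt2 // ?water_nil // water_cons1 // water_nil. Qed.

Lemma lwet_lt2 n : n < 2 -> lwet n = 0.
Proof.
by move=> n_lt2; rewrite /lwet wcount_lt2 // ?lwater_nil // lwater_cons1 // lwater_nil.
Qed.

Lemma with2_lt2 n : n < 2 -> with2 n = 0.
Proof. by move=> n_lt2; rewrite /with2 wcount_lt2 ?lwater_nil. Qed.

Lemma wetSS n : wet n.+2 = wet n.+1 + lwet n.
Proof.
rewrite /wet wcountS ?water_nil //; congr (_ + _).
  apply: count_short_weighted_cons => // s s12.
  by rewrite /weighted /= water_cons1.
apply: count_short_weighted_cons => // s s12.
by rewrite /weighted /= water_cons2 // !addSn addnS.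
Qed.

Lemma lwetSS n : lwet n.+2 = lwet n + with2 n.
Proof.
rewrite /lwet wcountS ?lwater_nil // addnC; congr (_ + _).
  apply: count_short_weighted_cons => // s s12.
  by rewrite /weighted /= lwater_cons2 // s12 !addSn addnS.
apply: count_short_weighted_cons => // s s12.
rewrite /weighted /= lwater_cons1 // s12 /=.
case s2: (2 \in s) => /=; first by rewrite !addSn addnS.
by rewrite lwater_eq0 ?s2 // !andbF.
Qed.

Lemma with2SS n : with2 n.+2 = 2 * with2 n + no2 n.
Proof.
rewrite /with2 wcountS ?lwater_nil // mul2n -addnn -addnA; congr (_ + _).
  apply: count_short_weighted_cons => // s s12.
  rewrite /weighted /= lwater_cons1 // s12 in_cons /=.
  by case: (2 \in s); rewrite /= ?andbF // !addSn addnS.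
rewrite -wcount_predT_split; apply: count_short_weighted_cons => // s s12.
by rewrite /weighted /= lwater_cons2 // s12 in_cons /= !addSn addnS !andbT.
Qed.

Lemma no2_eq1 n : no2 n = 1.
Proof.
elim: n => [|n IH]; first by rewrite /no2 /wcount count_short0 /weighted lwater_nil.
rewrite /no2 wcountS ?lwater_nil // addnC count_short_pred0 ?add0n; last first.
  by move=> s; rewrite /weighted /= !andbF.
rewrite -[RHS]IH; apply: count_short_weighted_cons => // s s12.
rewrite /weighted /= lwater_cons1 // s12 in_cons /=.
by case: (2 \in s); rewrite /= ?andbF // add0n addSn.
Qed.

Lemma w_count_short m k :
  w m k = count_short (fun s => is_comp12 m s && (water s == k)) m.
Proof.
by apply: eq_bigr => t _; rewrite (card_tuple3 t (fun s => is_comp12 m s && (water s == k))).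
Qed.

Lemma sum_nat_indicator (P : pred nat) x m n :
  \sum_(m <= k < n) (P k && (k == x)) = P x && (m <= x < n).
Proof.
rewrite (eq_bigr (fun k => if P k && (k == x) then 1 else 0)) => [|k _]; last first.
  by case: (_ && _).
by rewrite -big_mkcond big_nat1_cond_eq andbC; case: ifP.
Qed.

Lemma diag_wet n : diag n = wet n.
Proof.
rewrite /diag (@eq_big_nat _ _ _ _ _ _
    (fun k => count_short (fun s => is_comp12 (n - k) s && (water s == k)) n)); last first.
  move=> k /andP[_ le_k_n]; rewrite w_count_short (count_short_bound _ (leq_subr k n)) //.
  by move=> s /andP[/andP[/size_le_sumn + /eqP]]; lia.
rewrite /wet /wcount /count_short exchange_big /=; apply: eq_bigr => j _.
apply: sum_count_pointwise => s.
rewrite (eq_bigr (fun k => nat_of_bool ((all12 s && (sumn s == n - water s)) && (k == water s))))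
  => [|k _]; last by case: (eqVneq k (water s)) => [->|_]; rewrite ?andbT ?andbF.
rewrite sum_nat_indicator /weighted.
case: (all12 s) => //=; congr (nat_of_bool _).
by apply/idP/idP; [case/and3P | case/andP]; lia.
Qed.

Local Open Scope ring_scope.

Section TruncatedSeries.

Variable R : comNzRingType.

Definition eq_modXn (N : nat) (p q : {poly R}) : Prop :=
  forall i, (i < N)%N -> p`_i = q`_i.

Definition series (N : nat) (u : nat -> R) : {poly R} := \poly_(i < N) u i.

Lemma eq_modXn_mull N r p q : eq_modXn N p q -> eq_modXn N (r * p) (r * q).
Proof.
move=> pq i lt_iN; rewrite !coefM; apply: eq_bigr => j _.
by rewrite pq // (leq_ltn_trans (leq_subr _ _) lt_iN).
Qed.

Lemma eq_modXn_compose N p q m a b c :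
  eq_modXn N (p * a) (m * b) -> eq_modXn N (q * b) c ->
  eq_modXn N (q * p * a) (m * c).
Proof.
move=> pa qb i lt_iN; rewrite -mulrA (eq_modXn_mull q pa) //.
by rewrite mulrCA (eq_modXn_mull m qb).
Qed.

Lemma series_recurrence N k (c : R) (u v : nat -> R) :
  (0 < k <= 2)%N -> u 0%N = 0 -> u 1%N = 0 ->
  (forall i, u i.+2 = c * u (i.+2 - k)%N + v i) ->
  eq_modXn N ((1 - c *: 'X^k) * series N u) ('X^2 * series N v).
Proof.
move=> /andP[k_gt0 k_le2] u0 u1 rec i lt_iN.
rewrite mulrBl mul1r -scalerAl coefB coefZ !coefXnM !coef_poly lt_iN.
case: i lt_iN => [|[|i]] lt_iN /=.
- by rewrite k_gt0 u0 mulr0 subr0.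
- by case: k {rec} k_gt0 k_le2 => [|[|[|]]] //= _ _; rewrite u1 ?u0 ?if_same mulr0 subr0.
- rewrite ltnNge (leq_trans k_le2) // subSS subn1 /= (ltnW (ltnW lt_iN)).
  by rewrite (leq_ltn_trans (leq_subr k i.+2) lt_iN) rec addrAC subrr add0r.
Qed.

Lemma series_const1 N : eq_modXn N ((1 - 'X) * series N (fun=> 1)) 1.
Proof.
move=> i lt_iN; rewrite mulrBl mul1r coefB coefXM coef1 !coef_poly lt_iN.
by case: i lt_iN => [|i] lt_iN /=; rewrite ?subr0 // (ltnW lt_iN) subrr.
Qed.

End TruncatedSeries.

Definition gf (N : nat) (f : nat -> nat) : {poly int} := series N (fun n => (f n)%:R).

Lemma gf_wet N : eq_modXn N ((1 - 'X) * gf N wet) ('X^2 * gf N lwet).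
Proof.
rewrite -[X in 1 - X]expr1 -[X in 1 - X]scale1r.
apply: series_recurrence; rewrite ?wet_lt2 //.
by move=> i; rewrite wetSS natrD mul1r subn1.
Qed.

Lemma gf_lwet N : eq_modXn N ((1 - 'X^2) * gf N lwet) ('X^2 * gf N with2).
Proof.
rewrite -[X in 1 - X]scale1r.
apply: series_recurrence; rewrite ?lwet_lt2 //.
by move=> i; rewrite lwetSS natrD mul1r !subSS subn0.
Qed.

Lemma gf_with2 N : eq_modXn N ((1 - 2%:R *: 'X^2) * gf N with2) ('X^2 * gf N no2).
Proof.
apply: series_recurrence; rewrite ?with2_lt2 //.
by move=> i; rewrite with2SS natrD natrM !subSS subn0.
Qed.

Lemma gf_no2 N : eq_modXn N ((1 - 'X) * gf N no2) 1.
Proof.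
have -> : gf N no2 = series N (fun=> 1) by apply: eq_poly => i _; rewrite no2_eq1.
exact: series_const1.
Qed.

Lemma gf_wet_denom N : eq_modXn N (gf N wet * denom) 'X^6.
Proof.
have := eq_modXn_compose (@gf_wet N)
  (eq_modXn_compose (@gf_lwet N) (eq_modXn_compose (@gf_with2 N) (@gf_no2 N))).
have -> : 'X^2 * ('X^2 * ('X^2 * 1)) = 'X^6 :> {poly int} by rewrite mulr1 -!exprD.
by congr eq_modXn; rewrite /denom; ring.
Qed.

Theorem mainTheorem8 :
  forall (N n : nat), (n < N)%N -> (diagGF N * denom)`_n = ('X^6 : {poly int})`_n.
Proof.
move=> N; have -> : diagGF N = gf N wet.
  by rewrite /gf /series poly_def; apply: eq_bigr => i _; rewrite diag_wet.
exact: gf_wet_denom.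
Qed.
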